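(* Let $n\in\mathbb{N}$ and $a_0,a_1,a_2\in\mathbb{C}$ with $a_0\neq0$, and let $\lambda_1,\lambda_2$ be the roots of $a_0\lambda^2+a_1\lambda+a_2=0$. If $\Re(\lambda_1)\Re(\lambda_2)\neq0$, then the equation $a_0\bm{x}''+a_1\bm{x}'+a_2\bm{x}=\bm{0}$ (with $\bm{x}\in C^2(\mathbb{R},\mathbb{C}^n)$) is Ulam stable on $\mathbb{R}$, and $\dfrac{1}{|a_0\Re(\lambda_1)\Re(\lambda_2)|}$ is an Ulam constant.
   Context: $\|\cdot\|$ is a norm on $\mathbb{C}^n$. Ulam stability: the equation $\alpha(t)\bm{x}''+\beta(t)\bm{x}'+\gamma(t)\bm{x}=\bm{f}(t)$ is Ulam stable on $I$ if there exists a constant $L>0$ such that for every $\varepsilon>0$ and every $\bm{\xi}\in C^2(I,\mathbb{C}^n)$ with $\sup_{t\in I}\|\alpha(t)\bm{\xi}''(t)+\beta(t)\bm{\xi}'(t)+\gamma(t)\bm{\xi}(t)-\bm{f}(t)\|\le\varepsilon$, there exists a solution $\bm{x}\in C^2(I,\mathbb{C}^n)$ of the equation with $\sup_{t\in I}\|\bm{\xi}(t)-\bm{x}(t)\|\le L\varepsilon$; such an $L$ is called an Ulam constant for the equation on $I$. $\Re(z)$ denotes the real part of $z$. *)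

From Stdlib Require Import Reals.
From Coquelicot Require Import Coquelicot.
From mathcomp Require Import ssreflect ssrbool eqtype ssrnat fintype.

Open Scope R_scope.

Definition cvec (n : nat) := 'I_n -> C.

Definition vadd {n} (u v : cvec n) : cvec n := fun i => Cplus (u i) (v i).
Definition vsub {n} (u v : cvec n) : cvec n := fun i => Cminus (u i) (v i).
Definition vscal {n} (c : C) (u : cvec n) : cvec n := fun i => Cmult c (u i).
Definition vzero (n : nat) : cvec n := fun _ => RtoC 0.

Definition is_norm {n} (N : cvec n -> R) : Prop :=
  (forall u v, N (vadd u v) <= N u + N v) /\
  (forall (c : C) u, N (vscal c u) = Cmod c * N u) /\
  (forall u, N u = 0 -> u = vzero n).

(* x' = x1 and x1' = x2 on R (derivatives of C^n-valued functions of a real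
   variable, coordinatewise, C viewed as a normed R-module), and x2 is
   continuous: i.e. x is in C^2(R, C^n) with derivatives x1, x2. *)
Definition C2_with {n} (x x1 x2 : R -> cvec n) : Prop :=
  (forall t i, @is_derive R_AbsRing C_R_NormedModule (fun s => x s i) t (x1 t i)) /\
  (forall t i, @is_derive R_AbsRing C_R_NormedModule (fun s => x1 s i) t (x2 t i)) /\
  (forall t i, continuous (fun s => x2 s i) t).

Definition lhs {n} (alpha beta gamma : R -> C) (x x1 x2 : R -> cvec n) (t : R)
  : cvec n :=
  vadd (vadd (vscal (alpha t) (x2 t)) (vscal (beta t) (x1 t))) (vscal (gamma t) (x t)).

Definition is_solution {n} (alpha beta gamma : R -> C) (f : R -> cvec n)
  (x : R -> cvec n) : Prop :=
  exists x1 x2, C2_with x x1 x2 /\ forall t, lhs alpha beta gamma x x1 x2 t = f t.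

(* L is an Ulam constant for alpha x'' + beta x' + gamma x = f on I = R,
   w.r.t. the norm N. (sup_t N(..) <= eps  is written  forall t, N(..) <= eps.) *)
Definition UlamConstant {n} (N : cvec n -> R) (alpha beta gamma : R -> C)
  (f : R -> cvec n) (L : R) : Prop :=
  0 < L /\
  forall eps : R, 0 < eps ->
  forall xi xi1 xi2 : R -> cvec n, C2_with xi xi1 xi2 ->
  (forall t, N (vsub (lhs alpha beta gamma xi xi1 xi2 t) (f t)) <= eps) ->
  exists x, is_solution alpha beta gamma f x /\
            forall t, N (vsub (xi t) (x t)) <= L * eps.

Definition UlamStable {n} (N : cvec n -> R) (alpha beta gamma : R -> C)
  (f : R -> cvec n) : Prop :=
  exists L, UlamConstant N alpha beta gamma f L.

From Stdlib Require Import Reals Lra FunctionalExtensionality ClassicalEpsilon.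
From Coquelicot Require Import Coquelicot.
From mathcomp Require Import ssreflect ssrbool eqtype ssrnat fintype.
Open Scope R_scope.

(* Writing the equation as  a0 (D - lam1)(D - lam2) x = 0,  everything reduces
   to a first-order statement: if Re lam <> 0 and  N(eta' - lam eta) <= dl  on
   R, then  N(eta - e^(lam t) c) <= dl / |Re lam|  for some constant vector c.
   For Re lam > 0, psi = e^(-lam t) eta has  N(psi') <= dl e^(-a t)  (a = Re lam),
   so by a mean value inequality psi is Cauchy at +oo; since all norms on C^n
   are equivalent, psi converges to some c, and the bound follows.  Re lam < 0
   is reduced to this case by reversing time. *)

Ltac Cring := cbv beta; match goal with |- ?A = ?B => change (@eq C A B) end; ring.

Notation derC f t l := (@is_derive R_AbsRing C_R_NormedModule f t l).

Lemma Cmod_le_Re_Im (z : C) : Cmod z <= Rabs (Re z) + Rabs (Im z).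
Proof.
  destruct z as [x y]; rewrite /Cmod /Re /Im /=.
  have hx := Rabs_pos x; have hy := Rabs_pos y.
  rewrite -(sqrt_Rsqr (Rabs x + Rabs y)); last lra.
  apply: sqrt_le_1_alt; rewrite /Rsqr.
  have := Rsqr_abs x; have := Rsqr_abs y; rewrite /Rsqr; nra.
Qed.

Lemma Im_le_Cmod (z : C) : Rabs (Im z) <= Cmod z.
Proof.
  destruct z as [x y]; rewrite /Cmod /Im /= -sqrt_Rsqr_abs.
  apply: sqrt_le_1_alt; rewrite /Rsqr; nra.
Qed.

Lemma is_derive_eps_iff {V : NormedModule R_AbsRing} (f : R -> V) t l :
  is_derive f t l <->
  forall e, 0 < e -> exists d, 0 < d /\ forall u, Rabs (u - t) < d ->
    norm (minus (minus (f u) (f t)) (scal (u - t) l)) <= e * Rabs (u - t).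
Proof.
  split.
  - move=> [_ Hf] e he.
    have Ht : is_filter_lim (locally t) t by [].
    case: (Hf t Ht (mkposreal e he)) => d Hd.
    by exists d; split; [apply: cond_pos | move=> u Hu; apply: (Hd u)].
  - move=> H; split; first exact: is_linear_scal_l.
    move=> x /(@is_filter_lim_locally_unique _ R_NormedModule) <- eps.
    case: (H eps (cond_pos eps)) => d [hd Hd].
    by exists (mkposreal d hd) => u Hu; apply: Hd.
Qed.

Lemma derR_eps_iff (f : R -> R) t l :
  is_derive f t l <->
  forall e, 0 < e -> exists d, 0 < d /\ forall u, Rabs (u - t) < d ->
    Rabs (f u - f t - (u - t) * l) <= e * Rabs (u - t).
Proof. exact: is_derive_eps_iff. Qed.

Lemma scal_C (r : R) (z : C) : @scal R_Ring C_R_ModuleSpace r z = Cmult (RtoC r) z.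
Proof. by destruct z; rewrite /Cmult /RtoC /scal /= /prod_scal /scal /= /mult /=; f_equal; ring. Qed.

Lemma derC_eps_iff (f : R -> C) t l :
  derC f t l <->
  forall e, 0 < e -> exists d, 0 < d /\ forall u, Rabs (u - t) < d ->
    Cmod (Cminus (Cminus (f u) (f t)) (Cmult (RtoC (u - t)) l)) <= e * Rabs (u - t).
Proof.
  rewrite is_derive_eps_iff; split=> H e he; case: (H e he) => d [hd Hd];
    exists d; split=> // u Hu; have := Hd u Hu;
    by rewrite -?Cmod_norm ?scal_C.
Qed.

Lemma gap_Re_Im (a b l : C) (r : R) :
  Re (Cminus (Cminus a b) (Cmult (RtoC r) l)) = Re a - Re b - r * Re l /\
  Im (Cminus (Cminus a b) (Cmult (RtoC r) l)) = Im a - Im b - r * Im l.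
Proof. by destruct a, b, l; rewrite /Cminus /Cplus /Copp /Cmult /RtoC /Re /Im /=; split; ring. Qed.

Lemma derC_parts_iff (f : R -> C) t l :
  derC f t l <->
  is_derive (fun s => Re (f s)) t (Re l) /\ is_derive (fun s => Im (f s)) t (Im l).
Proof.
  rewrite derC_eps_iff !derR_eps_iff.
  split.
  - move=> H; split=> e he; case: (H e he) => d [hd Hd]; exists d; split=> // u Hu;
      apply: Rle_trans (Hd u Hu); case: (gap_Re_Im (f u) (f t) l (u - t)) => hre him.
    + by rewrite -hre; apply: re_le_Cmod.
    + by rewrite -him; apply: Im_le_Cmod.
  - move=> [Hre Him] e he.
    case: (Hre (e / 2)) => [|d1 [hd1 H1]]; first lra.
    case: (Him (e / 2)) => [|d2 [hd2 H2]]; first lra.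
    exists (Rmin d1 d2); split; first exact: Rmin_pos.
    move=> u Hu; apply: Rle_trans (Cmod_le_Re_Im _) _.
    case: (gap_Re_Im (f u) (f t) l (u - t)) => -> ->.
    have := H1 u (Rlt_le_trans _ _ _ Hu (Rmin_l _ _)).
    have := H2 u (Rlt_le_trans _ _ _ Hu (Rmin_r _ _)); lra.
Qed.

Lemma derC_mult (f g : R -> C) t a b : derC f t a -> derC g t b ->
  derC (fun s => Cmult (f s) (g s)) t (Cplus (Cmult a (g t)) (Cmult (f t) b)).
Proof.
  move=> /derC_parts_iff [Rf If] /derC_parts_iff [Rg Ig]; apply/derC_parts_iff; split.
  - replace (Re _) with (Re a * Re (g t) + Re (f t) * Re b - (Im a * Im (g t) + Im (f t) * Im b))
      by (rewrite /Re /Im /=; ring).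
    apply: (is_derive_ext (fun s => Re (f s) * Re (g s) - Im (f s) * Im (g s))) => [//|].
    exact: is_derive_minus (Derive.is_derive_mult _ _ _ _ _ Rf Rg)
                           (Derive.is_derive_mult _ _ _ _ _ If Ig).
  - replace (Im _) with (Re a * Im (g t) + Re (f t) * Im b + (Im a * Re (g t) + Im (f t) * Re b))
      by (rewrite /Re /Im /=; ring).
    apply: (is_derive_ext (fun s => Re (f s) * Im (g s) + Im (f s) * Re (g s))) => [//|].
    exact: is_derive_plus (Derive.is_derive_mult _ _ _ _ _ Rf Ig)
                          (Derive.is_derive_mult _ _ _ _ _ If Rg).
Qed.

Lemma derC_plus (f g : R -> C) t a b : derC f t a -> derC g t b ->
  derC (fun s => Cplus (f s) (g s)) t (Cplus a b).
Proof. exact: is_derive_plus. Qed.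

Lemma derC_const (c : C) t : derC (fun _ => c) t (RtoC 0).
Proof. exact: (@is_derive_const R_AbsRing C_R_NormedModule c t). Qed.

Lemma derC_RtoC t : derC (fun s => RtoC s) t (RtoC 1).
Proof. by apply/derC_parts_iff; rewrite /Re /Im /RtoC /=; split; auto_derive. Qed.

Lemma derC_scal (f : R -> C) c t a : derC f t a ->
  derC (fun s => Cmult c (f s)) t (Cmult c a).
Proof.
  move=> Hf; have -> : Cmult c a = Cplus (Cmult (RtoC 0) (f t)) (Cmult c a) by Cring.
  exact: derC_mult (derC_const c t) Hf.
Qed.

Lemma derC_mulr (f : R -> C) c t a : derC f t a ->
  derC (fun s => Cmult (f s) c) t (Cmult a c).
Proof.
  move=> Hf; have -> : Cmult a c = Cplus (Cmult a c) (Cmult (f t) (RtoC 0)) by Cring.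
  exact: derC_mult Hf (derC_const c t).
Qed.

Lemma derC_sub (f g : R -> C) t a b : derC f t a -> derC g t b ->
  derC (fun s => Cminus (f s) (g s)) t (Cminus a b).
Proof. exact: is_derive_minus. Qed.

Lemma derC_reflect (f : R -> C) t l : derC f (- t) l ->
  derC (fun s => f (- s)) t (Copp l).
Proof.
  move=> Hf; have := is_derive_comp f Ropp t l (-1) Hf ltac:(auto_derive; [done | ring]).
  by rewrite scal_C; have -> : Copp l = Cmult (RtoC (-1)) l by Cring.
Qed.

Definition cexp (mu : C) (t : R) : C :=
  (exp (Re mu * t) * cos (Im mu * t), exp (Re mu * t) * sin (Im mu * t)).

Lemma derC_cexp mu t : derC (cexp mu) t (Cmult mu (cexp mu t)).
Proof. by apply/derC_parts_iff; rewrite /cexp /Re /Im /=; split; (auto_derive; [done | ring]). Qed.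

Lemma Cmod_cexp mu t : Cmod (cexp mu t) = exp (Re mu * t).
Proof.
  rewrite /Cmod /cexp /= -[RHS]sqrt_pow2; last exact/Rlt_le/exp_pos.
  f_equal; have := sin2_cos2 (Im mu * t); rewrite /Rsqr /=; nra.
Qed.

Lemma cexp_opp_r mu t : Cmult (cexp mu t) (cexp (Copp mu) t) = RtoC 1.
Proof.
  rewrite /cexp /Cmult /Copp /Re /Im /RtoC /=.
  rewrite !Ropp_mult_distr_l_reverse cos_neg sin_neg exp_Ropp.
  have := sin2_cos2 (snd mu * t); have := exp_pos (fst mu * t); rewrite /Rsqr => he hsc.
  f_equal; field_simplify; lra.
Qed.

Lemma cexp_opp_opp mu s : cexp (Copp mu) (- s) = cexp mu s.
Proof. by rewrite /cexp /Copp /Re /Im /= !Rmult_opp_opp. Qed.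

(* The real sequence r tends to 0 (only the bound from above is required). *)
Definition vanishes (r : nat -> R) : Prop :=
  forall e, 0 < e -> exists M, forall p, (M <= p)%N -> r p < e.

Lemma vanishes_le0 (X : R) r : vanishes r -> (forall m, X <= r m) -> X <= 0.
Proof.
  move=> Hr HX; apply: Rnot_lt_le => hX.
  case: (Hr X hX) => M /(_ M (leqnn M)); have := HX M; lra.
Qed.

Lemma vanishes_inv c : vanishes (fun m => c / (INR m + 1)).
Proof.
  move=> e he; case: (Rle_lt_dec c 0) => hc.
  - exists 0%N => p _; have := pos_INR p => hp.
    have : c / (INR p + 1) <= 0 by apply: Rmult_le_0_r => //; apply/Rlt_le/Rinv_0_lt_compat; lra.
    lra.
  - case: (archimed_cor1 (e / c)) => [|M [HM HM0]]; first exact: Rdiv_lt_0_compat.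
    exists M => p /leP /le_INR hp.
    have hM : 0 < INR M by apply: lt_0_INR.
    have : / (INR p + 1) < / INR M by apply: Rinv_lt_contravar; nra.
    have : c * / INR M < e.
    { apply: (Rmult_lt_reg_r (/ c)); first exact: Rinv_0_lt_compat.
      by replace (c * / INR M * / c) with (/ INR M) by (field; lra). }
    rewrite /Rdiv; nra.
Qed.

Lemma vanishes_exp a M : 0 < a -> vanishes (fun m => M * exp (- (a * INR m))).
Proof.
  move=> ha e he; case: (Rle_lt_dec M 0) => hM.
  - by exists 0%N => p _; have := exp_pos (- (a * INR p)); nra.
  - have hm := Rmin_pos 1 a Rlt_0_1 ha.
    case: (vanishes_inv (M / Rmin 1 a) e he) => K HK; exists K => p /HK.
    have hp := pos_INR p.
    have : exp (- (a * INR p)) <= / (Rmin 1 a * (INR p + 1)).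
    { rewrite exp_Ropp; apply: Rinv_le_contravar; first nra.
      have := exp_ineq1_le (a * INR p); have := Rmin_l 1 a; have := Rmin_r 1 a; nra. }
    replace (M / Rmin 1 a / (INR p + 1)) with (M * / (Rmin 1 a * (INR p + 1))) by (field; lra).
    nra.
Qed.

Lemma vanishes_bound c r s : 0 <= c -> vanishes r ->
  (forall m, s m <= c * r m) -> vanishes s.
Proof.
  move=> hc Hr Hs e he; case: (Req_dec c 0) => [c0|cn0].
  - by exists 0%N => p _; have := Hs p; rewrite c0 Rmult_0_l; lra.
  - case: (Hr (e / c)) => [|M HM]; first (apply: Rdiv_lt_0_compat; lra).
    exists M => p /HM hp; have := Hs p.
    have : c * r p < e by replace e with (c * (e / c)) by (field; lra); apply: Rmult_lt_compat_l => //; lra.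
    lra.
Qed.

Lemma vanishes_plus r s : vanishes r -> vanishes s -> vanishes (fun m => r m + s m).
Proof.
  move=> Hr Hs e he; case: (Hr (e / 2)) => [|M1 H1]; first lra.
  case: (Hs (e / 2)) => [|M2 H2]; first lra.
  exists (maxn M1 M2) => p; rewrite geq_max => /andP [/H1 h1 /H2 h2]; lra.
Qed.

Lemma rate_Cauchy_crit (v : nat -> R) r : vanishes r ->
  (forall p q, (p <= q)%N -> Rabs (v p - v q) <= r p) -> Cauchy_crit v.
Proof.
  move=> Hr Hv e he; case: (Hr (e / 2)) => [|M HM]; first lra.
  exists M => p q /leP hp /leP hq; rewrite /R_dist.
  have := Hv M p hp; have := Hv M q hq; have := HM M (leqnn M).
  have := Rabs_triang (- (v M - v p)) (v M - v q); rewrite Rabs_Ropp.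
  replace (- (v M - v p) + (v M - v q)) with (v p - v q) by ring; lra.
Qed.

Lemma Cauchy_rate_limit (u : nat -> C) r : vanishes r ->
  (forall p q, (p <= q)%N -> Cmod (Cminus (u p) (u q)) <= r p) ->
  {l : C | forall p, Cmod (Cminus (u p) l) <= r p}.
Proof.
  move=> Hr Hu.
  have gap_Re p q : Rabs (Re (u p) - Re (u q)) <= Cmod (Cminus (u p) (u q)) by exact: (re_le_Cmod (Cminus (u p) (u q))).
  have gap_Im p q : Rabs (Im (u p) - Im (u q)) <= Cmod (Cminus (u p) (u q)) by exact: (Im_le_Cmod (Cminus (u p) (u q))).
  case: (Rcomplete.R_complete (fun p => Re (u p))) => [|lr Hlr].
  { apply: rate_Cauchy_crit Hr _ => p q /Hu; have := gap_Re p q; lra. }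
  case: (Rcomplete.R_complete (fun p => Im (u p))) => [|li Hli].
  { apply: rate_Cauchy_crit Hr _ => p q /Hu; have := gap_Im p q; lra. }
  exists (lr, li) => p; apply: Rle_plus_epsilon => e he.
  case: (Hlr (e / 2)) => [|M1 HM1]; first lra.
  case: (Hli (e / 2)) => [|M2 HM2]; first lra.
  set q := maxn p (maxn M1 M2).
  have hq1 : (q >= M1)%coq_nat by apply/leP; rewrite /q !leq_max leqnn !orbT.
  have hq2 : (q >= M2)%coq_nat by apply/leP; rewrite /q !leq_max leqnn !orbT.
  have := HM1 q hq1; have := HM2 q hq2; have := Hu p q (leq_maxl _ _); rewrite /R_dist.
  have -> : Cminus (u p) (lr, li) = Cplus (Cminus (u p) (u q)) (Cminus (u q) (lr, li)) by Cring.
  have := Cmod_triangle (Cminus (u p) (u q)) (Cminus (u q) (lr, li)).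
  have := Cmod_le_Re_Im (Cminus (u q) (lr, li)).
  have -> : Re (Cminus (u q) (lr, li)) = Re (u q) - lr by [].
  have -> : Im (Cminus (u q) (lr, li)) = Im (u q) - li by [].
  lra.
Qed.

Lemma cvec_ext {n} (u v : cvec n) : (forall i, u i = v i) -> u = v.
Proof. exact: functional_extensionality. Qed.

Ltac vring := apply: cvec_ext => ?; unfold vadd, vsub, vscal, vzero; Cring.

Section NormFacts.
Context {n : nat} {N : cvec n -> R} (HN : is_norm N).

Lemma norm_add u v : N (vadd u v) <= N u + N v.
Proof. by case: HN => H _; apply: H. Qed.

Lemma norm_scal c u : N (vscal c u) = Cmod c * N u.
Proof. by case: HN => _ [H _]; apply: H. Qed.

Lemma norm_eq0 u : N u = 0 -> u = vzero n.
Proof. by case: HN => _ [_ H]; apply: H. Qed.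

Lemma norm_zero : N (vzero n) = 0.
Proof.
  have -> : vzero n = vscal (RtoC 0) (vzero n) by vring.
  by rewrite norm_scal Cmod_0 Rmult_0_l.
Qed.

Lemma norm_opp u : N (vscal (RtoC (-1)) u) = N u.
Proof. by rewrite norm_scal Cmod_R Rabs_Ropp Rabs_R1 Rmult_1_l. Qed.

Lemma norm_nonneg u : 0 <= N u.
Proof.
  have := norm_add u (vscal (RtoC (-1)) u).
  have -> : vadd u (vscal (RtoC (-1)) u) = vzero n by vring.
  rewrite norm_zero norm_opp; lra.
Qed.

Lemma norm_sub_sym u v : N (vsub u v) = N (vsub v u).
Proof. by rewrite -norm_opp; congr N; vring. Qed.

Lemma norm_sub_triangle u v w : N (vsub u w) <= N (vsub u v) + N (vsub v w).
Proof. have -> : vsub u w = vadd (vsub u v) (vsub v w) by vring. exact: norm_add. Qed.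

Lemma norm_sub_le u v : N (vsub u v) <= N u + N v.
Proof.
  have -> : vsub u v = vadd u (vscal (RtoC (-1)) v) by vring.
  by rewrite -(norm_opp v); apply: norm_add.
Qed.

Definition unitv (i0 : 'I_n) : cvec n := fun i => if i == i0 then RtoC 1 else RtoC 0.

Definition trunc (k : nat) (v : cvec n) : cvec n :=
  fun i => if (i < k)%N then v i else RtoC 0.

Lemma trunc_succ k v (i0 : 'I_n) : nat_of_ord i0 = k ->
  trunc k.+1 v = vadd (trunc k v) (vscal (v i0) (unitv i0)).
Proof.
  move=> hi0; apply: cvec_ext => i; rewrite /trunc /vadd /vscal /unitv ltnS.
  have -> : (i == i0) = (nat_of_ord i == k) by rewrite -hi0.
  case: (ltngtP i k) => hik; try Cring.
  have -> : i = i0 by apply: val_inj; rewrite /= hik hi0.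
  Cring.
Qed.

Lemma trunc_large k v : (n <= k)%N -> trunc k v = v.
Proof. by move=> hk; apply: cvec_ext => i; rewrite /trunc (leq_trans (ltn_ord i) hk). Qed.

(* Upper bound: N v <= K max_i |v_i|, by the triangle inequality on v = sum_i v_i e_i. *)
Lemma norm_le_max_coord :
  exists K, 0 <= K /\ forall v B, (forall i, Cmod (v i) <= B) -> N v <= K * B.
Proof.
  suff Hk k : exists K, 0 <= K /\
      forall v B, (forall i, Cmod (v i) <= B) -> N (trunc k v) <= K * B.
  { case: (Hk n) => K [hK HK]; exists K; split=> // v B hB.
    by rewrite -(trunc_large n v (leqnn n)); apply: HK. }
  elim: k => [|k [K [hK IH]]].
  - exists 0; split=> [|v B _]; first lra.
    have -> : trunc 0 v = vzero n by apply: cvec_ext.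
    rewrite norm_zero; lra.
  - case: (ltnP k n) => hk.
    + set i0 := Ordinal hk; have he := norm_nonneg (unitv i0).
      exists (K + N (unitv i0)); split=> [|v B hB]; first lra.
      rewrite (trunc_succ k v i0) //; apply: Rle_trans (norm_add _ _) _.
      rewrite norm_scal; have := IH v B hB.
      have := Rmult_le_compat_r _ _ _ he (hB i0); lra.
    + exists K; split=> // v B hB.
      have -> : trunc k.+1 v = trunc k v by rewrite !trunc_large // leqW.
      exact: IH.
Qed.

(* Vectors vanishing from coordinate k on, and the statement that on them every
   coordinate is bounded by c N; the lower bound is proved by induction on k. *)
Definition supported (k : nat) (v : cvec n) : Prop :=
  forall i : 'I_n, (k <= i)%N -> v i = RtoC 0.

Definition coord_bound (k : nat) (c : R) : Prop :=
  forall v, supported k v -> forall i, Cmod (v i) <= c * N v.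

Lemma supported_full v : supported n v.
Proof. by move=> i hi; move: (ltn_ord i); rewrite ltnNge hi. Qed.

Lemma supported_sub k u v : supported k u -> supported k v -> supported k (vsub u v).
Proof. by move=> hu hv i hi; rewrite /vsub hu // hv //; Cring. Qed.

Lemma supported_succ k (i0 : 'I_n) v : nat_of_ord i0 = k -> supported k.+1 v ->
  supported k (vsub v (vscal (v i0) (unitv i0))).
Proof.
  move=> hi0 hv i hi; rewrite /vsub /vscal /unitv.
  case: eqP => [->|hne]; first Cring.
  rewrite hv; first Cring.
  rewrite ltn_neqAle hi andbT; apply/eqP => hik; apply: hne.
  by apply: val_inj; rewrite /= -hik hi0.
Qed.

Lemma supported_limit k (c : R) (ws : nat -> cvec n) (r : nat -> R) :
  0 <= c -> coord_bound k c -> (forall m, supported k (ws m)) -> vanishes r ->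
  (forall p q, (p <= q)%N -> N (vsub (ws p) (ws q)) <= r p) ->
  exists wl, supported k wl /\ vanishes (fun m => N (vsub (ws m) wl)).
Proof.
  move=> hc Hc Hws Hr Hcau.
  have Hcr : vanishes (fun m => c * r m) by apply: (vanishes_bound c r) => // m; lra.
  have coord_cauchy i p q : (p <= q)%N -> Cmod (Cminus (ws p i) (ws q i)) <= c * r p.
  { move=> hpq; apply: Rle_trans (Hc _ (supported_sub _ _ _ (Hws p) (Hws q)) i) _.
    exact: Rmult_le_compat_l (Hcau p q hpq). }
  pose wl i := proj1_sig (Cauchy_rate_limit _ _ Hcr (coord_cauchy i)).
  have Hwl i m : Cmod (Cminus (ws m i) (wl i)) <= c * r m.
  { exact: (proj2_sig (Cauchy_rate_limit _ _ Hcr (coord_cauchy i))). }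
  exists wl; split.
  - move=> i hi; apply: Cmod_eq_0; have := Cmod_ge_0 (wl i).
    suff : Cmod (wl i) <= 0 by lra.
    apply: (vanishes_le0 _ _ Hcr) => m.
    have -> : wl i = Copp (Cminus (ws m i) (wl i)) by rewrite (Hws m i hi); Cring.
    by rewrite Cmod_opp; apply: Hwl.
  - case: norm_le_max_coord => K [hK HK].
    by apply: (vanishes_bound K _ _ hK Hcr) => m; apply: HK => i; apply: Hwl.
Qed.

(* e_k stays at positive N-distance d from the vectors supported on k coordinates:
   otherwise an approximating sequence would converge to e_k inside that subspace. *)
Lemma unitv_apart k c (i0 : 'I_n) : nat_of_ord i0 = k -> 0 <= c -> coord_bound k c ->
  exists d, 0 < d /\ forall w, supported k w -> d <= N (vsub (unitv i0) w).
Proof.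
  move=> hi0 hc Hc; apply: Classical_Prop.NNPP => Hno.
  have Hex m : exists w, supported k w /\ N (vsub (unitv i0) w) < / (INR m + 1).
  { apply: Classical_Prop.NNPP => Hm; apply: Hno; exists (/ (INR m + 1)); split.
    - by apply: Rinv_0_lt_compat; have := pos_INR m; lra.
    - by move=> w hw; apply: Rnot_lt_le => hlt; apply: Hm; exists w. }
  pose ws m := proj1_sig (constructive_indefinite_description _ (Hex m)).
  have Hws m : supported k (ws m) /\ N (vsub (unitv i0) (ws m)) < / (INR m + 1).
  { exact: (proj2_sig (constructive_indefinite_description _ (Hex m))). }
  case: (supported_limit k c ws (fun m => 2 / (INR m + 1)) hc Hc (fun m => proj1 (Hws m))
           (vanishes_inv 2)) => [p q /leP /le_INR hpq|wl [hwl Hlim]].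
  { apply: Rle_trans (norm_sub_triangle _ (unitv i0) _) _.
    rewrite norm_sub_sym; have := proj2 (Hws p); have := proj2 (Hws q).
    have : / (INR q + 1) <= / (INR p + 1).
    { by apply: Rinv_le_contravar; have := pos_INR p; lra. }
    rewrite /Rdiv; lra. }
  have hle : N (vsub (unitv i0) wl) <= 0.
  { apply: (vanishes_le0 _ _ (vanishes_plus _ _ (vanishes_inv 1) Hlim)) => m.
    apply: Rle_trans (norm_sub_triangle _ (ws m) _) _.
    have := proj2 (Hws m); rewrite /Rdiv Rmult_1_l; lra. }
  have := norm_eq0 _ (Rle_antisym _ _ hle (norm_nonneg _)).
  move/(f_equal (fun v => fst (v i0))); rewrite /vsub /vzero /unitv eqxx hwl ?hi0 //=; lra.
Qed.

Lemma apart_coord k d (i0 : 'I_n) v : nat_of_ord i0 = k ->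
  (forall w, supported k w -> d <= N (vsub (unitv i0) w)) ->
  supported k.+1 v -> Cmod (v i0) * d <= N v.
Proof.
  move=> hi0 Hd hv; set a := v i0.
  case: (Ceq_dec a (RtoC 0)) => [->|ha].
  - by rewrite Cmod_0 Rmult_0_l; apply: norm_nonneg.
  - set w := vscal (Copp (Cinv a)) (vsub v (vscal a (unitv i0))).
    have hw : supported k w.
    { move=> i hi; rewrite /w /vscal (supported_succ k i0 v hi0 hv i hi); Cring. }
    have -> : v = vscal a (vsub (unitv i0) w).
    { apply: cvec_ext => i; rewrite /w /vscal /vsub; field; exact: ha. }
    rewrite norm_scal; apply: Rmult_le_compat_l; first exact: Cmod_ge_0.
    exact: Hd.
Qed.

Lemma coord_bound_succ k c d (i0 : 'I_n) : nat_of_ord i0 = k -> 0 <= c -> 0 < d ->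
  coord_bound k c -> (forall w, supported k w -> d <= N (vsub (unitv i0) w)) ->
  exists c', 0 <= c' /\ coord_bound k.+1 c'.
Proof.
  move=> hi0 hc hd Hc Hd; set e := N (unitv i0).
  have he : 0 <= e := norm_nonneg (unitv i0).
  have hid : 0 < / d by apply: Rinv_0_lt_compat.
  have hc' : 0 <= c * (1 + e * / d) by apply: Rmult_le_pos; nra.
  exists (/ d + c * (1 + e * / d)); split=> [|v hv i]; first lra.
  have hNv := norm_nonneg v.
  have ha : Cmod (v i0) <= / d * N v.
  { apply: (Rmult_le_reg_r d) => //.
    replace (/ d * N v * d) with (N v) by (field; lra); exact: apart_coord hi0 Hd hv. }
  have hv' : N (vsub v (vscal (v i0) (unitv i0))) <= N v + / d * N v * e.
  { apply: Rle_trans (norm_sub_le _ _) _; rewrite norm_scal -/e.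
    have := Rmult_le_compat_r _ _ _ he ha; lra. }
  case: (eqVneq i i0) => [->|hne].
  - by have := Rmult_le_pos _ _ hc' hNv; rewrite Rmult_plus_distr_r; lra.
  - have -> : v i = vsub v (vscal (v i0) (unitv i0)) i.
    { by rewrite /vsub /vscal /unitv (negbTE hne); Cring. }
    apply: Rle_trans (Hc _ (supported_succ k i0 v hi0 hv) i) _.
    replace ((/ d + c * (1 + e * / d)) * N v) with (/ d * N v + c * (N v + / d * N v * e)) by ring.
    have := Rmult_le_compat_l _ _ _ hc hv'; have := Rmult_le_pos _ _ (Rlt_le _ _ hid) hNv; lra.
Qed.

Lemma coord_le_norm : exists c, 0 <= c /\ forall v i, Cmod (v i) <= c * N v.
Proof.
  suff Hk k : (k <= n)%N -> exists c, 0 <= c /\ coord_bound k c.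
  { case: (Hk n (leqnn n)) => c [hc Hc]; exists c; split=> // v i.
    exact: Hc (supported_full v) i. }
  elim: k => [|k IH] hk.
  - exists 0; split=> [|v hv i]; first lra.
    rewrite (hv i (leq0n _)) Cmod_0; lra.
  - case: (IH (ltnW hk)) => c [hc Hc].
    have hi0 : nat_of_ord (Ordinal hk) = k by [].
    case: (unitv_apart k c (Ordinal hk) hi0 hc Hc) => d [hd Hd].
    exact: coord_bound_succ hi0 hc hd Hc Hd.
Qed.

End NormFacts.

Lemma real_induction (a b : R) (P : R -> Prop) : a <= b -> P a ->
  (forall c, a <= c <= b -> exists d, 0 < d /\ forall u1 u2, u1 <= c <= u2 ->
     Rabs (u1 - c) < d -> Rabs (u2 - c) < d -> P u1 -> P u2) ->
  P b.
Proof.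
  move=> hab Pa Hloc.
  pose E x := a <= x <= b /\ forall u, a <= u <= x -> P u.
  have Ea : E a by split=> [|u hu]; [lra | have -> : u = a by lra].
  have [c [Hub Hleast]] := completeness E (ex_intro _ b (fun x Ex => proj2 (proj1 Ex)))
                                      (ex_intro _ a Ea).
  have hac : a <= c := Hub a Ea.
  have hcb : c <= b by apply: Hleast => x [hx _]; lra.
  have near_sup y : y < c -> exists x, E x /\ y < x.
  { move=> hy; apply: Classical_Prop.NNPP => Hno.
    suff : c <= y by lra.
    by apply: Hleast => x Ex; apply: Rnot_lt_le => hx; apply: Hno; exists x. }
  case: (Hloc c (conj hac hcb)) => d [hd Hd].
  case: (near_sup (c - d)) => [|u1 [Eu1 hu1]]; first lra.
  have hu1c : u1 <= c := Hub u1 Eu1.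
  set m := Rmin b (c + d / 2).
  have Em : E m.
  { split; first by split; [apply: Rmin_glb; lra | apply: Rmin_l].
    move=> u hu; case: (Rlt_le_dec u c) => huc.
    - case: (near_sup u huc) => x [[_ Ex] hx]; apply: Ex; lra.
    - have hum : u <= c + d / 2 by apply: Rle_trans (proj2 hu) (Rmin_r _ _).
      apply: (Hd u1 u) => //; try (apply: Rabs_def1; lra).
      by case: Eu1 => hEu1 Pu1; apply: Pu1; lra. }
  have hmc : m <= c := Hub m Em.
  have -> : b = m by move: hmc; rewrite /m /Rmin; case: Rle_dec; lra.
  by case: Em => hm Pm; apply: Pm; lra.
Qed.

Lemma uniform_delta {n} (s : R) (P : 'I_n -> R -> Prop) :
  (forall i, exists d, 0 < d /\ forall u, Rabs (u - s) < d -> P i u) ->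
  exists d, 0 < d /\ forall u, Rabs (u - s) < d -> forall i, P i u.
Proof.
  move=> H.
  suff Hk k : exists d, 0 < d /\ forall u, Rabs (u - s) < d -> forall i : 'I_n, (i < k)%N -> P i u.
  { case: (Hk n) => d [hd Hd]; exists d; split=> // u hu i; exact: Hd. }
  elim: k => [|k [d [hd IH]]]; first by exists 1; split=> [|u _ i]; [lra | rewrite ltn0].
  case: (ltnP k n) => hkn.
  - case: (H (Ordinal hkn)) => d' [hd' H'].
    exists (Rmin d d'); split=> [|u hu i]; first exact: Rmin_pos.
    rewrite ltnS leq_eqVlt => /orP [/eqP hik|hik].
    + have -> : i = Ordinal hkn by apply: val_inj.
      by apply: H'; apply: Rlt_le_trans hu (Rmin_r _ _).
    + by apply: IH => //; apply: Rlt_le_trans hu (Rmin_l _ _).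
  - exists d; split=> // u hu i _; apply: IH => //.
    exact: leq_trans (ltn_ord i) hkn.
Qed.

Section MeanValue.
Context {n : nat} {N : cvec n -> R} (HN : is_norm N).
Variables (phi phi1 : R -> cvec n) (G G1 : R -> R).
Hypothesis Hphi : forall s i, derC (fun u => phi u i) s (phi1 s i).
Hypothesis HG : forall s, is_derive G s (G1 s).
Hypothesis Hbound : forall s, N (phi1 s) <= G1 s.

Lemma cvec_derive_eps s e : 0 < e -> exists d, 0 < d /\ forall u, Rabs (u - s) < d ->
  N (vsub (vsub (phi u) (phi s)) (vscal (RtoC (u - s)) (phi1 s))) <= e * Rabs (u - s).
Proof.
  move=> he; case: (norm_le_max_coord HN) => K [hK HK].
  have he' : 0 < e / (K + 1) by apply: Rdiv_lt_0_compat; lra.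
  case: (uniform_delta s (fun i u => Cmod (Cminus (Cminus (phi u i) (phi s i))
            (Cmult (RtoC (u - s)) (phi1 s i))) <= e / (K + 1) * Rabs (u - s))) => [i|d [hd Hd]].
  { exact: (proj1 (derC_eps_iff _ _ _) (Hphi s i)). }
  exists d; split=> // u hu; apply: Rle_trans (HK _ _ (Hd u hu)) _.
  have := Rabs_pos (u - s); have : K * (e / (K + 1)) <= e.
  { apply: (Rmult_le_reg_r (K + 1)); first lra.
    replace (K * (e / (K + 1)) * (K + 1)) with (K * e) by (field; lra); nra. }
  nra.
Qed.

Lemma straddle_bound c e : 0 < e -> exists d, 0 < d /\ forall u1 u2, u1 <= c <= u2 ->
  Rabs (u1 - c) < d -> Rabs (u2 - c) < d ->
  N (vsub (phi u2) (phi u1)) <= G u2 - G u1 + e * (u2 - u1).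
Proof.
  move=> he.
  case: (cvec_derive_eps c (e / 2)) => [|d1 [hd1 H1]]; first lra.
  case: (proj1 (derR_eps_iff G c (G1 c)) (HG c) (e / 2)) => [|d2 [hd2 H2]]; first lra.
  exists (Rmin d1 d2); split=> [|u1 u2 hu hu1 hu2]; first exact: Rmin_pos.
  have hA1 := H1 u1 (Rlt_le_trans _ _ _ hu1 (Rmin_l _ _)).
  have hA2 := H1 u2 (Rlt_le_trans _ _ _ hu2 (Rmin_l _ _)).
  have /Rabs_le_between' hB1 := H2 u1 (Rlt_le_trans _ _ _ hu1 (Rmin_r _ _)).
  have /Rabs_le_between' hB2 := H2 u2 (Rlt_le_trans _ _ _ hu2 (Rmin_r _ _)).
  set X1 := vsub (vsub (phi u1) (phi c)) (vscal (RtoC (u1 - c)) (phi1 c)) in hA1.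
  set X2 := vsub (vsub (phi u2) (phi c)) (vscal (RtoC (u2 - c)) (phi1 c)) in hA2.
  have -> : vsub (phi u2) (phi u1) = vadd (vsub X2 X1) (vscal (RtoC (u2 - u1)) (phi1 c)).
  { rewrite /X1 /X2; apply: cvec_ext => i; rewrite /vadd /vsub /vscal.
    apply: injective_projections; rewrite /RtoC /Cminus /Cplus /Copp /Cmult /=; ring. }
  apply: Rle_trans (norm_add HN _ _) _; rewrite norm_scal // Cmod_R.
  have := norm_sub_le HN X2 X1.
  rewrite Rabs_right in hA2 hB2; last lra. rewrite Rabs_left1 in hA1 hB1; last lra.
  rewrite Rabs_right; last lra.
  have := Rmult_le_compat_l (u2 - u1) _ _ ltac:(lra) (Hbound c); lra.
Qed.

Lemma mean_value_ineq a b : a <= b -> N (vsub (phi b) (phi a)) <= G b - G a.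
Proof.
  move=> hab; apply: Rle_plus_epsilon => eps heps.
  set e := eps / (b - a + 1).
  have he : 0 < e by apply: Rdiv_lt_0_compat; lra.
  have hslack : e * (b - a) <= eps.
  { apply: (Rmult_le_reg_r (b - a + 1)); first lra.
    rewrite /e; field_simplify; [nra | lra]. }
  suff : N (vsub (phi b) (phi a)) <= G b - G a + e * (b - a) by lra.
  apply: (real_induction a b (fun u => N (vsub (phi u) (phi a)) <= G u - G a + e * (u - a))) => //.
  - have -> : vsub (phi a) (phi a) = vzero n by vring.
    rewrite norm_zero //; lra.
  - move=> c _; case: (straddle_bound c e he) => d [hd Hd].
    exists d; split=> // u1 u2 hu hu1 hu2 Pu1.
    apply: Rle_trans (norm_sub_triangle HN _ (phi u1) _) _.
    have := Hd u1 u2 hu hu1 hu2; lra.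
Qed.

End MeanValue.

Section FirstOrder.
Context {n : nat} {N : cvec n -> R} (HN : is_norm N).

Lemma limit_at_infinity (psi : R -> cvec n) (B a : R) : 0 < a ->
  (forall S T, S <= T -> N (vsub (psi T) (psi S)) <= B * exp (- (a * S))) ->
  exists c, forall t, N (vsub (psi t) c) <= B * exp (- (a * t)).
Proof.
  move=> ha Hinc.
  case: (coord_le_norm HN) => Cl [hCl HCl].
  have Hr := vanishes_exp a B ha.
  case: (supported_limit HN n Cl (fun m => psi (INR m)) _ hCl
           (fun v _ i => HCl v i) (fun m => supported_full _) Hr)
    => [p q /leP /le_INR hpq|c [_ Hc]].
  { by rewrite norm_sub_sym //; apply: Hinc. }
  exists c => t; apply: Rle_plus_epsilon => e he.
  case: (Hc e he) => M HM; case: (INR_unbounded t) => m0 hm0.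
  set m := maxn M m0.
  have htm : t <= INR m by apply: Rle_trans (Rlt_le _ _ hm0) (le_INR _ _ (leP (leq_maxr _ _))).
  apply: Rle_trans (norm_sub_triangle HN _ (psi (INR m)) _) _.
  rewrite norm_sub_sym //; have := Hinc _ _ htm; have := HM m (leq_maxl _ _); lra.
Qed.

(* First-order lemma for Re lam > 0: psi = e^(-lam t) eta has N(psi') <= dl e^(-a t),
   and its limit c at +oo gives N(eta - e^(lam t) c) <= dl / Re lam. *)
Lemma first_order_pos (lam : C) (dl : R) (eta eta1 : R -> cvec n) : 0 < Re lam ->
  (forall t i, derC (fun s => eta s i) t (eta1 t i)) ->
  (forall t, N (vsub (eta1 t) (vscal lam (eta t))) <= dl) ->
  exists c, forall t, N (vsub (eta t) (vscal (cexp lam t) c)) <= dl / Re lam.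
Proof.
  move=> ha Heta Hdef; set a := Re lam in ha *.
  have hdl : 0 <= dl by apply: Rle_trans (norm_nonneg HN _) (Hdef 0).
  pose psi s := vscal (cexp (Copp lam) s) (eta s).
  pose psi1 s := vscal (cexp (Copp lam) s) (vsub (eta1 s) (vscal lam (eta s))).
  have Hpsi s i : derC (fun u => psi u i) s (psi1 s i).
  { have -> : psi1 s i = Cplus (Cmult (Cmult (Copp lam) (cexp (Copp lam) s)) (eta s i))
                                (Cmult (cexp (Copp lam) s) (eta1 s i)).
    { rewrite /psi1 /vscal /vsub; Cring. }
    exact: derC_mult (derC_cexp _ s) (Heta s i). }
  have HG s : is_derive (fun u => - (dl / a) * exp (- (a * u))) s (dl * exp (- (a * s))).
  { by auto_derive; [done | field; lra]. }
  have Hb s : N (psi1 s) <= dl * exp (- (a * s)).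
  { rewrite /psi1 norm_scal // Cmod_cexp Rmult_comm.
    have -> : Re (Copp lam) * s = - (a * s) by rewrite /a /Re /=; ring.
    exact: Rmult_le_compat_r (Rlt_le _ _ (exp_pos _)) (Hdef s). }
  case: (limit_at_infinity psi (dl / a) a ha) => [S T hST|c Hc].
  { apply: Rle_trans (mean_value_ineq HN psi psi1 _ _ Hpsi HG Hb S T hST) _.
    have := exp_pos (- (a * T)); have : 0 <= dl / a by apply: Rdiv_le_0_compat.
    nra. }
  exists c => t.
  have -> : vsub (eta t) (vscal (cexp lam t) c) = vscal (cexp lam t) (vsub (psi t) c).
  { apply: cvec_ext => i; rewrite /psi /vscal /vsub.
    transitivity (Cminus (Cmult (Cmult (cexp lam t) (cexp (Copp lam) t)) (eta t i))
                         (Cmult (cexp lam t) (c i))).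
    - by rewrite cexp_opp_r; Cring.
    - Cring. }
  rewrite norm_scal // Cmod_cexp -/a.
  apply: Rle_trans (Rmult_le_compat_l _ _ _ (Rlt_le _ _ (exp_pos _)) (Hc t)) _.
  rewrite Rmult_comm Rmult_assoc -exp_plus.
  have -> : - (a * t) + a * t = 0 by ring.
  by rewrite exp_0 Rmult_1_r; apply: Rle_refl.
Qed.

(* First-order lemma for Re lam <> 0; the case Re lam < 0 follows by time reversal. *)
Lemma first_order (lam : C) (dl : R) (eta eta1 : R -> cvec n) : Re lam <> 0 ->
  (forall t i, derC (fun s => eta s i) t (eta1 t i)) ->
  (forall t, N (vsub (eta1 t) (vscal lam (eta t))) <= dl) ->
  exists c, forall t, N (vsub (eta t) (vscal (cexp lam t) c)) <= dl / Rabs (Re lam).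
Proof.
  move=> hl Heta Hdef; case: (Rlt_le_dec 0 (Re lam)) => [hpos|hnpos].
  { by rewrite Rabs_right; [apply: first_order_pos | lra]. }
  have hneg : 0 < Re (Copp lam) by rewrite /Re /=; rewrite /Re in hl hnpos; lra.
  pose etr s := eta (- s).
  pose etr1 s := vscal (RtoC (-1)) (eta1 (- s)).
  have Hetr t i : derC (fun s => etr s i) t (etr1 t i).
  { rewrite /etr1 /vscal; have -> : Cmult (RtoC (-1)) (eta1 (- t) i) = Copp (eta1 (- t) i) by Cring.
    exact: derC_reflect (Heta _ i). }
  case: (first_order_pos (Copp lam) dl etr etr1 hneg Hetr) => [t|c Hc].
  { have -> : vsub (etr1 t) (vscal (Copp lam) (etr t))
            = vscal (RtoC (-1)) (vsub (eta1 (- t)) (vscal lam (eta (- t)))).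
    { rewrite /etr1 /etr; vring. }
    by rewrite norm_opp //; apply: Hdef. }
  exists c => t; have := Hc (- t); rewrite /etr Ropp_involutive cexp_opp_opp.
  by rewrite Rabs_left; [| lra].
Qed.

End FirstOrder.

Lemma vieta (a0 a1 a2 lam1 lam2 : C) :
  (forall z : C, Cplus (Cplus (Cmult a0 (Cmult z z)) (Cmult a1 z)) a2
                 = Cmult a0 (Cmult (Cminus z lam1) (Cminus z lam2))) ->
  a1 = Copp (Cmult a0 (Cplus lam1 lam2)) /\ a2 = Cmult a0 (Cmult lam1 lam2).
Proof.
  move=> Hpoly.
  have E2 : a2 = Cmult a0 (Cmult lam1 lam2).
  { have := Hpoly (RtoC 0) => H.
    transitivity (Cplus (Cplus (Cmult a0 (Cmult (RtoC 0) (RtoC 0))) (Cmult a1 (RtoC 0))) a2);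
      first Cring.
    rewrite H; Cring. }
  split=> //; have := Hpoly (RtoC 1) => H.
  transitivity (Cminus (Cminus (Cplus (Cplus (Cmult a0 (Cmult (RtoC 1) (RtoC 1)))
                (Cmult a1 (RtoC 1))) a2) a0) a2); first Cring.
  rewrite H E2; Cring.
Qed.

Lemma lhs_factored {n} (a0 lam1 lam2 : C) (x x1 x2 : R -> cvec n) t :
  lhs (fun _ => a0) (fun _ => Copp (Cmult a0 (Cplus lam1 lam2)))
      (fun _ => Cmult a0 (Cmult lam1 lam2)) x x1 x2 t
  = vscal a0 (vsub (vsub (x2 t) (vscal lam2 (x1 t))) (vscal lam1 (vsub (x1 t) (vscal lam2 (x t))))).
Proof. rewrite /lhs; vring. Qed.

Definition scalar_solution (lam1 lam2 : C) (p p1 p2 : R -> C) : Prop :=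
  (forall t, derC p t (p1 t)) /\ (forall t, derC p1 t (p2 t)) /\
  (forall t, @ex_derive R_AbsRing C_R_NormedModule p2 t) /\
  (forall t, Cplus (Cminus (p2 t) (Cmult (Cplus lam1 lam2) (p1 t))) (Cmult (Cmult lam1 lam2) (p t))
             = RtoC 0).

Lemma cexp_scalar_solution lam1 lam2 :
  scalar_solution lam1 lam2 (cexp lam2) (fun t => Cmult lam2 (cexp lam2 t))
                  (fun t => Cmult (Cmult lam2 lam2) (cexp lam2 t)).
Proof.
  split; [|split; [|split]] => t.
  - exact: derC_cexp.
  - have -> : Cmult (Cmult lam2 lam2) (cexp lam2 t) = Cmult lam2 (Cmult lam2 (cexp lam2 t)) by Cring.
    exact: derC_scal (derC_cexp _ t).
  - eexists; exact: derC_scal (derC_cexp _ t).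
  - Cring.
Qed.

(* A scalar solution q with  q' - lam2 q = e^(lam1 t):  q = e^(lam1 t) / (lam1 - lam2),
   or  t e^(lam1 t)  when lam1 = lam2. *)
Lemma resonant_solution lam1 lam2 : exists q q1 q2,
  scalar_solution lam1 lam2 q q1 q2 /\ forall t, Cminus (q1 t) (Cmult lam2 (q t)) = cexp lam1 t.
Proof.
  have [al [be [Hab1 Hab2]]] : exists al be : C,
      Cplus be (Cmult (Cminus lam1 lam2) al) = RtoC 1 /\ Cmult (Cminus lam1 lam2) be = RtoC 0.
  { case: (Ceq_dec lam1 lam2) => [->|hne].
    - by exists (RtoC 0), (RtoC 1); split; Cring.
    - have hd : Cminus lam1 lam2 <> RtoC 0.
      { move=> h; apply: hne; have -> : lam1 = Cplus (Cminus lam1 lam2) lam2 by Cring.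
        rewrite h; Cring. }
      by exists (Cinv (Cminus lam1 lam2)), (RtoC 0); split; [field | Cring]. }
  pose q t := Cmult (Cplus al (Cmult be (RtoC t))) (cexp lam1 t).
  pose q1 t := Cplus (Cmult be (cexp lam1 t)) (Cmult lam1 (q t)).
  pose q2 t := Cplus (Cmult (Cmult (RtoC 2) (Cmult be lam1)) (cexp lam1 t)) (Cmult (Cmult lam1 lam1) (q t)).
  have Dq t : derC q t (q1 t).
  { have := derC_mult _ _ t _ _ (derC_plus _ _ t _ _ (derC_const al t) (derC_scal _ be t _ (derC_RtoC t)))
                                (derC_cexp lam1 t).
    by have -> : q1 t = Cplus (Cmult (Cplus (RtoC 0) (Cmult be (RtoC 1))) (cexp lam1 t))
                              (Cmult (Cplus al (Cmult be (RtoC t))) (Cmult lam1 (cexp lam1 t)))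
      by rewrite /q1 /q; Cring. }
  have Dq1 t : derC q1 t (Cplus (Cmult be (Cmult lam1 (cexp lam1 t))) (Cmult lam1 (q1 t))).
  { exact: derC_plus (derC_scal _ _ t _ (derC_cexp lam1 t)) (derC_scal _ _ t _ (Dq t)). }
  exists q, q1, q2; split; [split; [|split; [|split]]|] => t.
  - exact: Dq.
  - by have -> : q2 t = Cplus (Cmult be (Cmult lam1 (cexp lam1 t))) (Cmult lam1 (q1 t))
      by rewrite /q2 /q1; Cring.
  - eexists; exact: derC_plus (derC_scal _ _ t _ (derC_cexp lam1 t)) (derC_scal _ _ t _ (Dq t)).
  - transitivity (Cmult (Cmult (Cminus lam1 lam2) be) (cexp lam1 t)); first by rewrite /q2 /q1; Cring.
    rewrite Hab2; Cring.
  - transitivity (Cmult (Cplus (Cplus be (Cmult (Cminus lam1 lam2) al))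
                               (Cmult (Cmult (Cminus lam1 lam2) be) (RtoC t))) (cexp lam1 t));
      first by rewrite /q1 /q; Cring.
    rewrite Hab1 Hab2; Cring.
Qed.

Lemma modes_solution {n} (a0 lam1 lam2 : C) p p1 p2 q q1 q2 (c1 c2 : cvec n) :
  scalar_solution lam1 lam2 p p1 p2 -> scalar_solution lam1 lam2 q q1 q2 ->
  is_solution (fun _ => a0) (fun _ => Copp (Cmult a0 (Cplus lam1 lam2)))
    (fun _ => Cmult a0 (Cmult lam1 lam2)) (fun _ => vzero n)
    (fun t => vadd (vscal (p t) c1) (vscal (q t) c2)).
Proof.
  move=> [Dp [Dp1 [Dp2 Hp]]] [Dq [Dq1 [Dq2 Hq]]].
  exists (fun t => vadd (vscal (p1 t) c1) (vscal (q1 t) c2)),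
         (fun t => vadd (vscal (p2 t) c1) (vscal (q2 t) c2)).
  split; [split; [|split]|] => t.
  - move=> i; exact: derC_plus (derC_mulr _ _ t _ (Dp t)) (derC_mulr _ _ t _ (Dq t)).
  - move=> i; exact: derC_plus (derC_mulr _ _ t _ (Dp1 t)) (derC_mulr _ _ t _ (Dq1 t)).
  - move=> i; apply: ex_derive_continuous.
    case: (Dp2 t) => l hl; case: (Dq2 t) => m hm.
    eexists; exact: derC_plus (derC_mulr _ _ t _ hl) (derC_mulr _ _ t _ hm).
  - apply: cvec_ext => i; rewrite /lhs /vadd /vscal /vzero.
    transitivity (Cmult a0 (Cplus
      (Cmult (Cplus (Cminus (p2 t) (Cmult (Cplus lam1 lam2) (p1 t))) (Cmult (Cmult lam1 lam2) (p t))) (c1 i))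
      (Cmult (Cplus (Cminus (q2 t) (Cmult (Cplus lam1 lam2) (q1 t))) (Cmult (Cmult lam1 lam2) (q t))) (c2 i))));
      first Cring.
    rewrite Hp Hq; Cring.
Qed.

(* Two applications of the first-order lemma, to  eta = xi' - lam2 xi  and to
   zeta = xi - q c1, approximate any eps-solution xi by  q c1 + e^(lam2 t) c2. *)
Lemma second_order_approx {n} {N : cvec n -> R} (HN : is_norm N) (a0 lam1 lam2 : C) (eps : R)
    (xi xi1 xi2 : R -> cvec n) (q q1 : R -> C) :
  a0 <> RtoC 0 -> Re lam1 <> 0 -> Re lam2 <> 0 -> C2_with xi xi1 xi2 ->
  (forall t, derC q t (q1 t)) -> (forall t, Cminus (q1 t) (Cmult lam2 (q t)) = cexp lam1 t) ->
  (forall t, N (vsub (lhs (fun _ => a0) (fun _ => Copp (Cmult a0 (Cplus lam1 lam2)))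
                  (fun _ => Cmult a0 (Cmult lam1 lam2)) xi xi1 xi2 t) (vzero n)) <= eps) ->
  exists c1 c2 : cvec n, forall t,
    N (vsub (xi t) (vadd (vscal (q t) c1) (vscal (cexp lam2 t) c2)))
      <= eps / Cmod a0 / Rabs (Re lam1) / Rabs (Re lam2).
Proof.
  move=> ha0 hl1 hl2 [Dxi [Dxi1 _]] Dq Hq Hdef.
  have hm0 : 0 < Cmod a0 by apply/Cmod_gt_0.
  pose eta t := vsub (xi1 t) (vscal lam2 (xi t)).
  have Deta t i : derC (fun s => eta s i) t (vsub (xi2 t) (vscal lam2 (xi1 t)) i).
  { exact: derC_sub (Dxi1 t i) (derC_scal _ _ t _ (Dxi t i)). }
  case: (first_order HN lam1 (eps / Cmod a0) eta _ hl1 Deta) => [t|c1 Hc1].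
  { apply: (Rmult_le_reg_l (Cmod a0)) => //.
    replace (Cmod a0 * (eps / Cmod a0)) with eps by (field; lra).
    rewrite -(norm_scal HN); apply: Rle_trans (Hdef t); right.
    by congr N; rewrite lhs_factored /eta; vring. }
  pose zeta t := vsub (xi t) (vscal (q t) c1).
  have Dzeta t i : derC (fun s => zeta s i) t (vsub (xi1 t) (vscal (q1 t) c1) i).
  { exact: derC_sub (Dxi t i) (derC_mulr _ _ t _ (Dq t)). }
  case: (first_order HN lam2 (eps / Cmod a0 / Rabs (Re lam1)) zeta _ hl2 Dzeta) => [t|c2 Hc2].
  { have -> : vsub (vsub (xi1 t) (vscal (q1 t) c1)) (vscal lam2 (zeta t))
            = vsub (eta t) (vscal (cexp lam1 t) c1) by rewrite /zeta /eta -Hq; vring.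
    exact: Hc1. }
  exists c1, c2 => t.
  have -> : vsub (xi t) (vadd (vscal (q t) c1) (vscal (cexp lam2 t) c2))
          = vsub (zeta t) (vscal (cexp lam2 t) c2) by rewrite /zeta; vring.
  exact: Hc2.
Qed.

Theorem corollary3p2 (n : nat) (N : cvec n -> R) (a0 a1 a2 lam1 lam2 : C) :
  is_norm N ->
  a0 <> RtoC 0 ->
  (forall z : C, Cplus (Cplus (Cmult a0 (Cmult z z)) (Cmult a1 z)) a2
                 = Cmult a0 (Cmult (Cminus z lam1) (Cminus z lam2))) ->
  Re lam1 * Re lam2 <> 0 ->
  UlamStable N (fun _ => a0) (fun _ => a1) (fun _ => a2) (fun _ => vzero n) /\
  UlamConstant N (fun _ => a0) (fun _ => a1) (fun _ => a2) (fun _ => vzero n)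
    (1 / Rabs (Cmod a0 * Re lam1 * Re lam2)).
Proof.
  move=> HN ha0 Hpoly Hre; have [E1 E2] := vieta a0 a1 a2 lam1 lam2 Hpoly; subst a1 a2.
  have hl1 : Re lam1 <> 0 by move=> h; apply: Hre; rewrite h Rmult_0_l.
  have hl2 : Re lam2 <> 0 by move=> h; apply: Hre; rewrite h Rmult_0_r.
  have hm0 : 0 < Cmod a0 by apply/Cmod_gt_0.
  have hr1 := Rabs_pos_lt _ hl1; have hr2 := Rabs_pos_lt _ hl2.
  have HC : UlamConstant N (fun _ => a0) (fun _ => Copp (Cmult a0 (Cplus lam1 lam2)))
              (fun _ => Cmult a0 (Cmult lam1 lam2)) (fun _ => vzero n)
              (1 / Rabs (Cmod a0 * Re lam1 * Re lam2)).
  { rewrite !Rabs_mult (Rabs_right (Cmod a0)); last lra.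
    split=> [|eps heps xi xi1 xi2 Hxi Hdef].
    { by apply: Rdiv_lt_0_compat; [lra | apply: Rmult_lt_0_compat; [nra | lra]]. }
    case: (resonant_solution lam1 lam2) => q [q1 [q2 [Hqsol Hq]]].
    case: (second_order_approx HN a0 lam1 lam2 eps xi xi1 xi2 q q1 ha0 hl1 hl2 Hxi
             (proj1 Hqsol) Hq Hdef) => c1 [c2 Hc].
    exists (fun t => vadd (vscal (q t) c1) (vscal (cexp lam2 t) c2)); split.
    - exact: modes_solution Hqsol (cexp_scalar_solution lam1 lam2).
    - move=> t; apply: Rle_trans (Hc t) (Req_le _ _ _); field; lra. }
  by split; first exists (1 / Rabs (Cmod a0 * Re lam1 * Re lam2)).
Qed.
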